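(* Let $\mathbb{H}$ denote the ring of real quaternions with its usual norm $|\cdot|$, let $B_d(1)=\{x\in\mathbb{H}:|x|<1\}$, and let $S$ be a dense subsemigroup of $(\mathbb{H},+)$ such that $S\cap B_d(1)\setminus\{0\}$ is a subsemigroup of $(B_d(1)\setminus\{0\},\cdot)$. Let $\langle x_n\rangle_{n=1}^\infty$ be a sequence in $S$ such that $\sum_{n=1}^\infty x_n$ converges to $0$, and let $A\subseteq S$ be an IP$^*$ set near $0$ in $S$. Then there exists a sum subsystem $\langle y_n\rangle_{n=1}^\infty$ of $\langle x_n\rangle_{n=1}^\infty$ such that \[FS(\langle y_n\rangle_{n=1}^\infty)\cup FP(\langle y_n\rangle_{n=1}^\infty)\subseteq A.\]
   Context: $FS(\langle y_n\rangle_{n=1}^\infty)=\{\sum_{n\in F}y_n: F\text{ a finite nonempty subset of }\mathbb{N}\}$. $FP(\langle y_n\rangle_{n=1}^\infty)$ is the set of all products of finitely many (at least one) terms of $\langle y_n\rangle_{n=1}^\infty$, taken in any order, with no repetitions (multiplication in $\mathbb{H}$ being noncommutative). A sequence $\langle y_n\rangle_{n=1}^\infty$ is a sum subsystem of $\langle x_n\rangle_{n=1}^\infty$ if there is a sequence $\langle H_n\rangle_{n=1}^\infty$ of nonempty finite subsets of $\mathbb{N}$ with $\max H_n<\min H_{n+1}$ and $y_n=\sum_{t\in H_n}x_t$ for each $n$. A subset $C$ of $S$ is an IP set near $0$ if there is a sequence $\langle z_n\rangle_{n=1}^\infty$ in $S$ with $\sum_{n=1}^\infty z_n$ convergent and $FS(\langle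 z_n\rangle_{n=1}^\infty)\subseteq C$. A subset $D$ of $S$ is an IP$^*$ set near $0$ if for every IP set near $0$ $C\subseteq S$, $C\cap D$ is an IP set near $0$. *)

From Stdlib Require Import Reals List.
Open Scope R_scope.

(** Real quaternions a + b i + c j + d k. *)
Record quat : Type := Quat { q0 : R; q1 : R; q2 : R; q3 : R }.

Definition qzero : quat := Quat 0 0 0 0.
Definition qone : quat := Quat 1 0 0 0.

Definition qadd (x y : quat) : quat :=
  Quat (q0 x + q0 y) (q1 x + q1 y) (q2 x + q2 y) (q3 x + q3 y).

Definition qopp (x : quat) : quat := Quat (- q0 x) (- q1 x) (- q2 x) (- q3 x).

Definition qsub (x y : quat) : quat := qadd x (qopp y).

(** Hamilton product (i^2 = j^2 = k^2 = ijk = -1). *)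
Definition qmul (x y : quat) : quat :=
  Quat (q0 x * q0 y - q1 x * q1 y - q2 x * q2 y - q3 x * q3 y)
       (q0 x * q1 y + q1 x * q0 y + q2 x * q3 y - q3 x * q2 y)
       (q0 x * q2 y - q1 x * q3 y + q2 x * q0 y + q3 x * q1 y)
       (q0 x * q3 y + q1 x * q2 y - q2 x * q1 y + q3 x * q0 y).

Definition qnorm (x : quat) : R :=
  sqrt (q0 x * q0 x + q1 x * q1 x + q2 x * q2 x + q3 x * q3 x).

Definition in_unit_ball (x : quat) : Prop := qnorm x < 1.

Fixpoint psum (z : nat -> quat) (n : nat) : quat :=
  match n with
  | O => qzero
  | S m => qadd (psum z m) (z m)
  end.

Definition series_cvg_to (z : nat -> quat) (L : quat) : Prop :=
  forall eps : R, 0 < eps ->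
    exists N : nat, forall n : nat, (N <= n)%nat -> qnorm (qsub (psum z n) L) < eps.

Definition series_cvg (z : nat -> quat) : Prop := exists L, series_cvg_to z L.

(** A finite nonempty subset of N, represented by a duplicate-free nonempty list. *)
Definition fin_ne (F : list nat) : Prop := F <> nil /\ NoDup F.

(** sum_{t in F} x t  and the product of the x t in the order listed in F. *)
Definition lsum (x : nat -> quat) (F : list nat) : quat :=
  fold_right (fun i acc => qadd (x i) acc) qzero F.
Definition lprod (x : nat -> quat) (F : list nat) : quat :=
  fold_right (fun i acc => qmul (x i) acc) qone F.

Definition FS (y : nat -> quat) : quat -> Prop :=
  fun a => exists F, fin_ne F /\ a = lsum y F.

(** FP(<y_n>): products of finitely many (>= 1) distinct terms, in any order. *)
Definition FP (y : nat -> quat) : quat -> Prop :=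
  fun a => exists F, fin_ne F /\ a = lprod y F.

Definition sum_subsystem (y x : nat -> quat) : Prop :=
  exists H : nat -> list nat,
    (forall n, fin_ne (H n)) /\
    (forall n a b, In a (H n) -> In b (H (S n)) -> (a < b)%nat) /\
    (forall n, y n = lsum x (H n)).

Definition qsubset (A B : quat -> Prop) : Prop := forall a, A a -> B a.

Definition IP_near0 (S C : quat -> Prop) : Prop :=
  qsubset C S /\
  exists z : nat -> quat,
    (forall n, S (z n)) /\ series_cvg z /\ qsubset (FS z) C.

Definition IPstar_near0 (S D : quat -> Prop) : Prop :=
  qsubset D S /\
  forall C, IP_near0 S C -> IP_near0 S (fun a => C a /\ D a).

Definition qdense (S : quat -> Prop) : Prop :=
  forall x eps, 0 < eps -> exists s, S s /\ qnorm (qsub x s) < eps.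

Definition add_subsemigroup (S : quat -> Prop) : Prop :=
  forall a b, S a -> S b -> S (qadd a b).

Definition mul_subsemigroup_ball (S : quat -> Prop) : Prop :=
  forall a b, S a -> in_unit_ball a -> a <> qzero ->
              S b -> in_unit_ball b -> b <> qzero ->
              S (qmul a b) /\ in_unit_ball (qmul a b) /\ qmul a b <> qzero.

From Stdlib Require Import Reals List Lia Lra.
From mathcomp Require Import ssreflect ssrfun ssrbool boolp classical_sets filter.

(* The ultrafilters on (ℍ, +) containing all the sets
   {c ∈ S : |c| < e} ∩ FS(⟨x_n⟩_{n ≥ m}) form a closed subsemigroup of βℍ, which by the
   Ellis–Numakura lemma contains an idempotent p. By the Galvin–Glazer construction every
   member of p contains FS of a sum subsystem of ⟨x_n⟩, hence an IP set near 0; as A is IP*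
   near 0, p contains A and every "sandwich" {c : a c b ∈ A} with a, b ∈ (S ∩ B_d(1)) ∪ {1}.
   Choosing each y_n in A* and in the finitely many sandwiches formed with products of
   y_0, …, y_{n-1} puts every product of distinct y_i in A: split it at its largest index. *)

Local Open Scope classical_set_scope.

Lemma ultra_from_setVsetC (T : Type) (F : set_system T) :
  ProperFilter F -> (forall A, F A \/ F (~` A)) -> UltraFilter F.
Proof.
move=> FF FA; split=> // G GG sFG; rewrite predeqE => A; split; last exact: sFG.
move=> GA; case: (FA A) => // /sFG GnA.
by have /filter_ex [? []] : G (A `&` ~` A) by exact: filterI.
Qed.

Lemma filter_setC_not (T : Type) (F : set_system T) (A : set T) :
  ProperFilter F -> F (~` A) -> ~ F A.
Proof.
by move=> FF FnA FA; have /filter_ex [? []] : F (A `&` ~` A) by exact: filterI.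
Qed.

Lemma Zorn_nonempty_chains {U : Type} {P : set (set U)} {A0 : set U} : P A0 ->
  (forall C, C `<=` P -> C !=set0 -> total_on C subset -> P (\bigcup_(X in C) X)) ->
  exists A, P A /\ forall B, P B -> A `<=` B -> B = A.
Proof.
move=> PA0 Pch.
(* [Zorn_bigcup] also needs the union of the empty chain, which is [set0]. *)
have [A [PA Amax]] : exists A, (P `|` [set set0]) A /\
    forall B, A `<` B -> ~ (P `|` [set set0]) B.
  apply: Zorn_bigcup => C CP Ctot.
  have [[X CX PX]|noP] := pselect (exists2 X, C X & P X).
    left; have -> : \bigcup_(X in C) X = \bigcup_(X in C `&` P) X.
      rewrite eqEsubset; split=> [a [Y CY Ya]|a [Y [CY _] Ya]]; last by exists Y.
      by exists Y => //; split => //; case: (CP Y CY) => // Y0; rewrite Y0 in Ya.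
    apply: Pch; first by move=> ? [].
      by exists X.
    by move=> ? ? [? _] [? _]; exact: Ctot.
  right; rewrite /= eqEsubset; split=> // a [Y CY Ya].
  by case: (CP Y CY) => [PY|Y0]; [case: noP; exists Y|rewrite Y0 in Ya].
have maxA : forall B, (P `|` [set set0]) B -> A `<=` B -> B = A.
  move=> B QB AB; rewrite eqEsubset; split=> //.
  by apply: contrapT => nBA; exact: (Amax B (conj AB nBA) QB).
case: PA => [PA|/= A_0].
  by exists A; split => // B PB; apply: maxA; left.
have A0_0 : A0 = set0 by rewrite -A_0; apply: maxA; [left|rewrite A_0].
exists set0; split; first by rewrite -A0_0.
by move=> B PB _; rewrite -A_0; apply: maxA; [left|rewrite A_0].
Qed.

Section UltrafilterSemigroup.
Context {T : Type} (op : T -> T -> T).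
Hypothesis opA : forall a b c, op (op a b) c = op a (op b c).

(* The extension of [op] to βT. *)
Definition ultra_op (p q : set_system T) : set_system T :=
  fun A => p [set a | q [set b | A (op a b)]].

Lemma ultra_op_ultra p q : UltraFilter p -> UltraFilter q -> UltraFilter (ultra_op p q).
Proof.
move=> Up Uq; apply: ultra_from_setVsetC.
  apply: Build_ProperFilter_ex.
    move=> A pA; have [a qa] := @filter_ex _ p _ _ pA.
    by have [b Aab] := @filter_ex _ q _ _ qa; exists (op a b).
  split; rewrite /ultra_op.
  - by apply: filterS filterT => a _; exact: filterT.
  - by move=> A B pA pB; apply: filterS (filterI pA pB) => a [qA qB]; exact: filterI.
  - by move=> A B sAB; apply: filterS => a; apply: filterS => b /sAB.
move=> A; have [|pnA] := in_ultra_setVsetC [set a | q [set b | A (op a b)]] Up; first by left.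
right; apply: filterS pnA => a /= nqA.
by have [//|] := in_ultra_setVsetC [set b | A (op a b)] Uq.
Qed.

Lemma ultra_opA p q r : ultra_op (ultra_op p q) r = ultra_op p (ultra_op q r).
Proof.
apply/funext => A; rewrite /ultra_op; congr p; apply/funext => a; congr q.
by apply/funext => b; rewrite /mkset; congr r; apply/funext => c; rewrite opA.
Qed.

(* [ultras G] is the closed subset of βT determined by the filter [G], and
   [hull K] is the filter of the closure of [K]. *)
Definition ultras (G : set_system T) : set (set_system T) :=
  [set p | UltraFilter p /\ G `<=` p].

Definition hull (K : set (set_system T)) : set_system T :=
  [set A | forall p, K p -> p A].

Definition ultra_closed (K : set (set_system T)) := ultras (hull K) `<=` K.

Definition op_closed (K : set (set_system T)) :=
  forall p q, K p -> K q -> K (ultra_op p q).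

Lemma hull_proper K : (forall p, K p -> UltraFilter p) -> K !=set0 -> ProperFilter (hull K).
Proof.
move=> UK [p0 Kp0]; apply: Build_ProperFilter_ex.
  by move=> A /(_ p0 Kp0) pA; have := UK p0 Kp0 => Up0; exact: filter_ex pA.
split.
- by move=> p /UK Up; exact: filterT.
- by move=> A B hA hB p Kp; have := UK p Kp => Up; exact: filterI (hA p Kp) (hB p Kp).
- by move=> A B sAB hA p Kp; have := UK p Kp => Up; exact: filterS sAB (hA p Kp).
Qed.

Lemma ultras_hull K : (forall p, K p -> UltraFilter p) -> K `<=` ultras (hull K).
Proof. by move=> UK p Kp; split; [exact: UK|move=> A; apply]. Qed.

(* Compactness of βT and continuity of [q |-> ultra_op q p]. *)
Lemma ultra_closed_image G p : Filter G -> UltraFilter p ->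
  ultra_closed [set ultra_op q p | q in ultras G].
Proof.
move=> FG Up r [Ur sKr].
pose B (CD : set T * set T) := CD.1 `&` [set x | p [set b | CD.2 (op x b)]].
pose H := filter_from [set CD | G CD.1 /\ r CD.2] B.
have FH : Filter H.
  apply: filter_from_filter; first by exists (setT, setT); split; exact: filterT.
  move=> [C1 D1] [C2 D2] [GC1 rD1] [GC2 rD2].
  exists (C1 `&` C2, D1 `&` D2); first by split; exact: filterI.
  move=> x [[C1x C2x] /= pD]; split; split => //=.
  - by apply: filterS pD => b [].
  - by apply: filterS pD => b [].
have PH : ProperFilter H.
  apply: filter_from_proper => -[C D] [/= GC rD]; apply: contrapT => noB.
  apply: filter_setC_not rD; apply: sKr => _ [q [Uq sGq] <-].
  apply: filterS (sGq C GC) => x Cx /=.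
  have [pD|//] := in_ultra_setVsetC [set b | D (op x b)] Up.
  by case: noB; exists x.
have [q [Uq sHq]] := ultraFilterLemma PH.
exists q.
  split=> // C GC; apply: sHq; exists (C, setT); first by split; [|exact: filterT].
  by move=> x [].
have Uqp := ultra_op_ultra _ _ Uq Up.
apply: max_filter => D rD; apply: sHq; exists (setT, D); first by split; [exact: filterT|].
by move=> x [].
Qed.

Lemma ultra_closed_left_identities G p : UltraFilter p ->
  ultra_closed [set q | ultras G q /\ ultra_op q p = p].
Proof.
move=> Up r [Ur sKr]; split.
  split=> // A GA; apply: sKr => q [[_ sGq] _]; exact: sGq.
have Urp := ultra_op_ultra _ _ Ur Up.
by apply: max_filter => B pB; apply: sKr => q [_ qp]; rewrite -qp in pB.
Qed.

Definition semigroup_filter (F G : set_system T) :=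
  ProperFilter G /\ F `<=` G /\ op_closed (ultras G).

Lemma semigroup_filter_bigcup F C : C `<=` semigroup_filter F -> C !=set0 ->
  total_on C subset -> semigroup_filter F (\bigcup_(G in C) G).
Proof.
move=> sC [G0 CG0] Ctot.
have PC G : C G -> ProperFilter G by move=> /sC [].
split; [apply: Build_ProperFilter_ex|split].
- by move=> A [G CG GA]; have := PC G CG => PG; exact: filter_ex GA.
- split.
  + by exists G0 => //; have := PC G0 CG0 => PG0; exact: filterT.
  + move=> A B [G CG GA] [H CH HB]; have := PC G CG => PG; have := PC H CH => PH.
    have [sGH|sHG] := Ctot G H CG CH.
      by exists H => //; apply: filterI => //; exact: sGH.
    by exists G => //; apply: filterI => //; exact: sHG.
  + by move=> A B sAB [G CG GA]; exists G => //; have := PC G CG => PG; exact: filterS sAB GA.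
- by move=> A FA; exists G0 => //; have [_ [sFG _]] := sC G0 CG0; exact: sFG.
- move=> p q [Up sCp] [Uq sCq]; split; first exact: ultra_op_ultra.
  move=> A [G CG GA]; have [_ [_ opG]] := sC G CG.
  have sGC : G `<=` \bigcup_(G in C) G by move=> B GB; exists G.
  by have [_] := opG p q (conj Up (subset_trans sGC sCp)) (conj Uq (subset_trans sGC sCq)); apply.
Qed.

Theorem exists_idempotent (F : set_system T) : ProperFilter F -> op_closed (ultras F) ->
  exists2 p, ultras F p & ultra_op p p = p.
Proof.
(* Ellis–Numakura: for a maximal [semigroup_filter] G, [ultras G] is a minimal closed
   subsemigroup; minimality applied to {q p | q ∈ ultras G}, then to {q | q p = p}, gives p p = p. *)
move=> PF opF.
have [G [[PG [sFG opG]] Gmax]] := Zorn_nonempty_chains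
  (conj PF (conj (@subset_refl _ F) opF) : semigroup_filter F F) (@semigroup_filter_bigcup F).
have minimal K : K `<=` ultras G -> K !=set0 -> ultra_closed K -> op_closed K ->
    ultras G `<=` K.
  move=> sKG K0 Kcl Kop.
  have UK : forall p, K p -> UltraFilter p by move=> p /sKG [].
  have PK := hull_proper K UK K0.
  have sGK : G `<=` hull K by move=> A GA p /sKG [_]; apply.
  suff <- : hull K = G by [].
  apply: Gmax => //; split => //; split; first exact: subset_trans sGK.
  by move=> r s /Kcl Kr /Kcl Ks; apply: ultras_hull UK _ (Kop r s Kr Ks).
have [p Gp] : ultras G !=set0.
  by have [p [Up sGp]] := ultraFilterLemma PG; exists p.
have [q0 Gq0 q0p] : [set ultra_op q p | q in ultras G] p.
  apply: minimal => //.
  - by move=> _ [q Gq <-]; exact: opG.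
  - by exists (ultra_op p p); exists p.
  - by case: Gp => Up _; exact: ultra_closed_image.
  - move=> _ _ [q1 Gq1 <-] [q2 Gq2 <-].
    exists (ultra_op (ultra_op q1 p) q2); first exact: opG _ _ (opG _ _ Gq1 Gp) Gq2.
    by rewrite !ultra_opA.
have [_ pp] : [set q | ultras G q /\ ultra_op q p = p] p.
  apply: minimal => //.
  - by move=> q [].
  - by exists q0.
  - by apply: ultra_closed_left_identities; case: Gp.
  - move=> r s [Gr rp] [Gs sp]; split; first exact: opG.
    by rewrite ultra_opA sp.
by exists p => //; case: Gp => Up sGp; split => //; exact: subset_trans sGp.
Qed.

End UltrafilterSemigroup.

Local Open Scope R_scope.

Ltac quat_ring :=
  repeat match goal with q : quat |- _ => destruct q end;
  rewrite /qsub /qadd /qmul /qopp /qzero /qone /=; f_equal; ring.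

Lemma qaddA a b c : qadd (qadd a b) c = qadd a (qadd b c). Proof. quat_ring. Qed.
Lemma qaddC a b : qadd a b = qadd b a. Proof. quat_ring. Qed.
Lemma qadd0l a : qadd qzero a = a. Proof. quat_ring. Qed.
Lemma qadd0r a : qadd a qzero = a. Proof. quat_ring. Qed.
Lemma qsub0r a : qsub a qzero = a. Proof. quat_ring. Qed.
Lemma qaddKsub a b : qsub (qadd a b) a = b. Proof. quat_ring. Qed.
Lemma qmulA a b c : qmul (qmul a b) c = qmul a (qmul b c). Proof. quat_ring. Qed.
Lemma qmul1l a : qmul qone a = a. Proof. quat_ring. Qed.
Lemma qmul1r a : qmul a qone = a. Proof. quat_ring. Qed.
Lemma qmul0l a : qmul qzero a = qzero. Proof. quat_ring. Qed.
Lemma qmul0r a : qmul a qzero = qzero. Proof. quat_ring. Qed.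
Lemma qmulDr a b c : qmul a (qadd b c) = qadd (qmul a b) (qmul a c). Proof. quat_ring. Qed.
Lemma qmulDl a b c : qmul (qadd a b) c = qadd (qmul a c) (qmul b c). Proof. quat_ring. Qed.

Lemma qnorm_ge0 x : 0 <= qnorm x. Proof. exact: sqrt_pos. Qed.

Lemma qnorm1 : qnorm qone = 1.
Proof. by rewrite /qnorm /= (_ : 1 * 1 + 0 * 0 + 0 * 0 + 0 * 0 = 1) ?sqrt_1 //; ring. Qed.

Lemma qnormM a b : qnorm (qmul a b) = qnorm a * qnorm b.
Proof.
rewrite /qnorm -sqrt_mult_alt; last by case: a => /= *; nra.
by congr sqrt; case: a b => [? ? ? ?] [? ? ? ?] /=; ring.
Qed.

Definition qdot (a b : quat) : R := q0 a * q0 b + q1 a * q1 b + q2 a * q2 b + q3 a * q3 b.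

Lemma qdot_ge0 a : 0 <= qdot a a. Proof. rewrite /qdot; nra. Qed.

Lemma qnorm_sqr a : qnorm a * qnorm a = qdot a a.
Proof. exact: sqrt_sqrt (qdot_ge0 a). Qed.

Lemma qdot_le a b : qdot a b <= qnorm a * qnorm b.
Proof.
rewrite /qnorm -sqrt_mult_alt; last exact: qdot_ge0.
apply: Rle_trans (RRle_abs _) _; rewrite -sqrt_Rsqr_abs; apply: sqrt_le_1_alt.
case: a b => [a0 a1 a2 a3] [b0 b1 b2 b3]; rewrite /Rsqr /qdot /=.
(* Lagrange's identity *)
have -> : (a0 * a0 + a1 * a1 + a2 * a2 + a3 * a3) * (b0 * b0 + b1 * b1 + b2 * b2 + b3 * b3)
  = (a0 * b0 + a1 * b1 + a2 * b2 + a3 * b3) * (a0 * b0 + a1 * b1 + a2 * b2 + a3 * b3)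
    + ((a0 * b1 - a1 * b0) ^ 2 + (a0 * b2 - a2 * b0) ^ 2 + (a0 * b3 - a3 * b0) ^ 2
       + (a1 * b2 - a2 * b1) ^ 2 + (a1 * b3 - a3 * b1) ^ 2 + (a2 * b3 - a3 * b2) ^ 2)
  by ring.
rewrite -[X in X <= _]Rplus_0_r; apply: Rplus_le_compat_l.
by repeat apply: Rplus_le_le_0_compat; apply: pow2_ge_0.
Qed.

Lemma qnormD a b : qnorm (qadd a b) <= qnorm a + qnorm b.
Proof.
apply: Rsqr_incr_0_var; last by have := qnorm_ge0 a; have := qnorm_ge0 b; lra.
rewrite /Rsqr qnorm_sqr.
have -> : qdot (qadd a b) (qadd a b) = qdot a a + 2 * qdot a b + qdot b b.
  by rewrite /qdot /=; ring.
by rewrite -!qnorm_sqr; have := qdot_le a b; lra.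
Qed.

Lemma qnormB a b : qnorm (qsub a b) <= qnorm a + qnorm b.
Proof.
apply: Rle_trans (qnormD _ _) _; apply: Rplus_le_compat_l.
by rewrite /qnorm /=; apply: Req_le; congr sqrt; ring.
Qed.

Lemma qcomp_le_qnorm x : Rabs (q0 x) <= qnorm x /\ Rabs (q1 x) <= qnorm x /\
  Rabs (q2 x) <= qnorm x /\ Rabs (q3 x) <= qnorm x.
Proof.
case: x => a b c d; rewrite /qnorm /=.
by split; [|split; [|split]]; rewrite -sqrt_Rsqr_abs; apply: sqrt_le_1_alt; rewrite /Rsqr; nra.
Qed.

Lemma qnorm_le_comp x : qnorm x <= Rabs (q0 x) + Rabs (q1 x) + Rabs (q2 x) + Rabs (q3 x).
Proof.
case: x => a b c d; rewrite /qnorm /=.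
have sq y : y * y = Rabs y * Rabs y by rewrite -Rabs_mult Rabs_pos_eq //; nra.
have ? := Rabs_pos a; have ? := Rabs_pos b; have ? := Rabs_pos c; have ? := Rabs_pos d.
apply: Rsqr_incr_0_var; last by lra.
rewrite Rsqr_sqrt; last by nra.
by rewrite /Rsqr (sq a) (sq b) (sq c) (sq d); nra.
Qed.

Lemma Rseries_geometric_cvg (a : nat -> R) :
  (forall n, Rabs (a n) <= (1/2) ^ n) -> {l | Un_cv (sum_f_R0 a) l}.
Proof.
move=> ha; apply: cv_cauchy_2; apply: cauchy_abs; apply: cv_cauchy_1.
apply: (Rseries_CV_comp _ (fun n => (1/2) ^ n)) => [n|]; first by split; [exact: Rabs_pos|].
have gp := GP_infinite (1/2) ltac:(rewrite Rabs_pos_eq; lra).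
exists (/ (1 - 1/2)) => eps eps0; have [N hN] := gp eps eps0.
exists N => n nN; have := hN n nN.
by rewrite (sum_eq _ (fun k => (1/2) ^ k)) // => k _; ring.
Qed.

Lemma psum_comp (pi : quat -> R) (w : nat -> quat) n :
  (forall a b, pi (qadd a b) = pi a + pi b) ->
  pi (psum w (S n)) = sum_f_R0 (fun k => pi (w k)) n.
Proof.
move=> piD; elim: n => [|n IH]; first by rewrite /= qadd0l.
by rewrite [psum w _]/= piD IH.
Qed.

Lemma series_cvg_geometric (w : nat -> quat) :
  (forall n, qnorm (w n) <= (1/2) ^ n) -> series_cvg w.
Proof.
move=> hw.
have cvg (pi : quat -> R) : (forall x, Rabs (pi x) <= qnorm x) ->
    {l | Un_cv (sum_f_R0 (fun k => pi (w k))) l}.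
  by move=> hpi; apply: Rseries_geometric_cvg => n; exact: Rle_trans (hpi _) (hw n).
have [[l0 h0] [[l1 h1] [[l2 h2] [l3 h3]]]] :=
  (cvg q0 (fun x => proj1 (qcomp_le_qnorm x)), (cvg q1 (fun x => proj1 (proj2 (qcomp_le_qnorm x))),
  (cvg q2 (fun x => proj1 (proj2 (proj2 (qcomp_le_qnorm x)))),
   cvg q3 (fun x => proj2 (proj2 (proj2 (qcomp_le_qnorm x))))))).
exists (Quat l0 l1 l2 l3) => eps eps0.
have [N0 H0] := h0 (eps / 4) ltac:(lra); have [N1 H1] := h1 (eps / 4) ltac:(lra).
have [N2 H2] := h2 (eps / 4) ltac:(lra); have [N3 H3] := h3 (eps / 4) ltac:(lra).
exists (S (N0 + N1 + N2 + N3)) => -[|n] nN; first by lia.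
apply: Rle_lt_trans (qnorm_le_comp _) _.
rewrite /qsub /qadd /qopp; cbn [q0 q1 q2 q3].
rewrite (psum_comp q0) // (psum_comp q1) // (psum_comp q2) // (psum_comp q3) //.
have := H0 n ltac:(lia); have := H1 n ltac:(lia); have := H2 n ltac:(lia).
have := H3 n ltac:(lia); rewrite /Rdist /Rminus; lra.
Qed.

Lemma lsum_app y F G : lsum y (F ++ G) = qadd (lsum y F) (lsum y G).
Proof. by elim: F => [|i F IH] /=; rewrite ?qadd0l // IH qaddA. Qed.

Lemma lprod_app y F G : lprod y (F ++ G) = qmul (lprod y F) (lprod y G).
Proof. by elim: F => [|i F IH] /=; rewrite ?qmul1l // IH qmulA. Qed.

Lemma lsum_ext y z F : (forall i, In i F -> y i = z i) -> lsum y F = lsum z F.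
Proof.
elim: F => [|i F IH] //= yz; rewrite yz; last by left.
by rewrite IH // => j Fj; apply: yz; right.
Qed.

Lemma lprod_ext y z F : (forall i, In i F -> y i = z i) -> lprod y F = lprod z F.
Proof.
elim: F => [|i F IH] //= yz; rewrite yz; last by left.
by rewrite IH // => j Fj; apply: yz; right.
Qed.

Lemma lsum_sandwich a b z F :
  lsum (fun n => qmul (qmul a (z n)) b) F = qmul (qmul a (lsum z F)) b.
Proof. by elim: F => [|i F IH] /=; rewrite ?qmul0r ?qmul0l // IH qmulDr qmulDl. Qed.

Lemma lsum_insert y l1 n l2 : lsum y (l1 ++ n :: l2) = qadd (lsum y (l1 ++ l2)) (y n).
Proof. by rewrite !lsum_app /= qaddA [qadd (y n) _]qaddC -qaddA. Qed.

Lemma fin_ne1 n : fin_ne (n :: nil).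
Proof. by split=> //; constructor; [case|constructor]. Qed.

Definition below (n : nat) (F : list nat) := forall i, In i F -> (i < n)%nat.

Lemma list_max_In F : F <> nil -> In (list_max F) F.
Proof.
elim: F => [|i F IH] // _; case: F IH => [|j F] IH; first by left; simpl; lia.
change (In (Nat.max i (list_max (j :: F))) (i :: j :: F)).
by have [[_ ->]|[_ ->]] := Nat.max_spec i (list_max (j :: F)); [right; exact: IH|left].
Qed.

Lemma In_le_list_max F i : In i F -> (i <= list_max F)%nat.
Proof. by move: i; apply/Forall_forall/list_max_le. Qed.

Lemma fin_ne_split_max F : fin_ne F -> exists n l1 l2,
  F = l1 ++ n :: l2 /\ NoDup (l1 ++ l2) /\ below n (l1 ++ l2).
Proof.
move=> [F0 ndF]; have [l1 [l2 eF]] := in_split _ _ (list_max_In _ F0).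
exists (list_max F), l1, l2; rewrite eF in ndF.
have [nd nIn] := NoDup_remove _ _ _ ndF; split=> //; split=> // i Gi.
have ? : (i <= list_max F)%nat.
  by apply: In_le_list_max; rewrite eF; apply/in_app_iff; move/in_app_iff: Gi => /= [|]; auto.
have ? : i <> list_max F by move=> ei; apply: nIn; rewrite -ei.
lia.
Qed.

Lemma NoDup_below_length n F : NoDup F -> below n F -> (length F <= n)%nat.
Proof.
move=> ndF bF; rewrite -(length_seq n 0); apply: NoDup_incl_length => // i /bF ?.
by apply/in_seq; lia.
Qed.

Section FilterFiniteIntersections.
Variables (T : Type) (p : set_system T).
Context {Fp : Filter p}.

Lemma filter_forall_lt n (P : nat -> set T) :
  (forall i, p (P i)) -> p [set c | forall i, (i < n)%nat -> P i c].
Proof.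
move=> pP; elim: n => [|n IH]; first by apply: filterS filterT => c _ i; lia.
apply: filterS (filterI IH (pP n)) => c [IHc Pnc] i ?.
by have [->|?] := Nat.eq_dec i n; [|apply: IHc; lia].
Qed.

Lemma filter_forall_short_lists k n (P : list nat -> set T) : (forall F, p (P F)) ->
  p [set c | forall F, (length F <= k)%nat -> below n F -> P F c].
Proof.
elim: k P => [|k IH] P pP.
  by apply: filterS (pP nil) => c Pc [|i F] //= ?; lia.
have pcons : p [set c | forall i, (i < n)%nat -> forall F, (length F <= k)%nat ->
    below n F -> P (i :: F) c].
  by apply: filter_forall_lt => i; exact: IH.
apply: filterS (filterI (pP nil) pcons) => c [Pc Pcons] [|i F] //= lF bF.
by apply: Pcons; [apply: bF; left| lia| move=> j Fj; apply: bF; right].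
Qed.

Lemma filter_forall_nodup_below n (P : list nat -> set T) :
  (forall F, NoDup F -> below n F -> p (P F)) ->
  p [set c | forall F, NoDup F -> below n F -> P F c].
Proof.
move=> pP; have pP' : forall F, p [set c | NoDup F -> below n F -> P F c].
  move=> F; have [[ndF bF]|nF] := pselect (NoDup F /\ below n F).
    by apply: filterS (pP F ndF bF) => c ? _ _.
  by apply: filterS filterT => c _ ndF bF; case: nF.
apply: filterS (filter_forall_short_lists n n _ pP') => c PF F ndF bF.
by apply: PF => //; exact: NoDup_below_length.
Qed.

End FilterFiniteIntersections.

Definition lnth (l : list quat) (i : nat) : quat := nth i l qzero.

Lemma lnth_prefix y n i : (i < n)%nat -> lnth (map y (seq 0 n)) i = y i.
Proof.
move=> ilt; rewrite /lnth (nth_indep _ _ (y 0%nat)); last by rewrite length_map length_seq.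
by rewrite map_nth seq_nth.
Qed.

Lemma lsum_prefix y n F : below n F -> lsum (lnth (map y (seq 0 n))) F = lsum y F.
Proof. by move=> bF; apply: lsum_ext => i /bF; exact: lnth_prefix. Qed.

Lemma lprod_prefix y n F : below n F -> lprod (lnth (map y (seq 0 n))) F = lprod y F.
Proof. by move=> bF; apply: lprod_ext => i /bF; exact: lnth_prefix. Qed.

Fixpoint iterate_prefix {X : Type} (next : list X -> X) (n : nat) : list X :=
  match n with
  | O => nil
  | S n => iterate_prefix next n ++ next (iterate_prefix next n) :: nil
  end.

Lemma recursive_choice {X : Type} (P : list X -> X -> Prop) :
  (forall l, exists a, P l a) -> exists f : nat -> X, forall n, P (map f (seq 0 n)) (f n).
Proof.
move=> /choice [next Pnext]; exists (fun n => next (iterate_prefix next n)) => n.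
suff -> : map (fun i => next (iterate_prefix next i)) (seq 0 n) = iterate_prefix next n by [].
by elim: n => [|n IH] //; rewrite seq_S map_app IH.
Qed.

Definition FS_tail (x : nat -> quat) (m : nat) : set quat :=
  [set c | exists H, fin_ne H /\ (forall i, In i H -> (m <= i)%nat) /\ c = lsum x H].

Section IdempotentSumSubsystem.
Variables (x : nat -> quat) (p : set_system quat).
Hypotheses (Up : UltraFilter p) (p_idem : ultra_op qadd p p = p).
Hypothesis p_tail : forall m, p (FS_tail x m).

(* The set E* of the Galvin–Glazer proof of Hindman's theorem. *)
Definition star (E : set quat) : set quat := [set c | E c /\ p [set b | E (qadd c b)]].

Lemma star_in E : p E -> p (star E).
Proof.
move=> pE; have pE2 : ultra_op qadd p p E by rewrite p_idem.
exact: filterI pE pE2.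
Qed.

Lemma star_shift E c : star E c -> p [set b | star E (qadd c b)].
Proof.
move=> [_ pEc]; have pEc2 : ultra_op qadd p p [set b | E (qadd c b)] by rewrite p_idem.
apply: filterS (filterI pEc pEc2) => b [Ecb pEcb]; split=> //.
by apply: filterS pEcb => d /=; rewrite qaddA.
Qed.

Definition star_extends (E : set quat) (l : list quat) (c : quat) :=
  forall F, NoDup F -> below (length l) F -> F <> nil ->
    star E (lsum (lnth l) F) -> star E (qadd (lsum (lnth l) F) c).

Lemma star_extends_in E l : p (star_extends E l).
Proof.
apply: filter_forall_nodup_below => F _ _.
have [sF|nsF] := pselect (star E (lsum (lnth l) F)).
  by apply: filterS (star_shift _ _ sF) => c ? _.
by apply: filterS filterT => c _ _ /nsF.
Qed.

Lemma star_lsum E y : (forall n, star E (y n) /\ star_extends E (map y (seq 0 n)) (y n)) ->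
  forall F, fin_ne F -> star E (lsum y F).
Proof.
move=> yE; suff starF : forall k F, (length F <= k)%nat -> fin_ne F -> star E (lsum y F).
  by move=> F; exact: starF.
elim=> [|k IH] F lF fF; first by case: F lF fF => [_ [] //|i F /= ?]; lia.
have [n [l1 [l2 [eF [ndG bG]]]]] := fin_ne_split_max _ fF.
have [yn ext] := yE n; rewrite eF lsum_insert.
case eG: (l1 ++ l2) => [|i G]; first by rewrite qadd0l.
rewrite -eG -(lsum_prefix y _ _ bG); apply: ext => //; first by rewrite length_map length_seq.
  by rewrite eG.
rewrite lsum_prefix //; apply: IH; last by split => //; rewrite eG.
by move: lF; rewrite eF !length_app /=; lia.
Qed.

Lemma idempotent_sum_subsystem (E : set quat) (Ex : list quat -> set quat) :
  p E -> (forall l, p (Ex l)) ->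
  exists y, sum_subsystem y x /\ (forall F, fin_ne F -> E (lsum y F)) /\
    forall n, Ex (map y (seq 0 n)) (y n).
Proof.
move=> pE pEx.
pose bound (l : list (quat * list nat)) := S (list_max (concat (map snd l))).
pose good l (r : quat * list nat) :=
  [/\ fin_ne r.2 /\ forall i, In i r.2 -> (bound l <= i)%nat,
     r.1 = lsum x r.2, star E r.1, Ex (map fst l) r.1 & star_extends E (map fst l) r.1].
have [f fP] : exists f, forall n, good (map f (seq 0 n)) (f n).
  apply: recursive_choice => l.
  have [c [[H [fH [mH ->]]] [sc [Exc ec]]]] := @filter_ex _ p _ _ (filterI (p_tail (bound l))
    (filterI (star_in _ pE) (filterI (pEx (map fst l)) (star_extends_in E (map fst l))))).
  by exists (lsum x H, H).
pose y n := (f n).1; pose H n := (f n).2.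
have prefix n : map fst (map f (seq 0 n)) = map y (seq 0 n) by rewrite map_map.
exists y; split; [|split].
- exists H; split; [|split].
  + by move=> n; have [[]] := fP n.
  + move=> n a b Ha Hb; have [[_ bnd] _ _ _ _] := fP (S n).
    have : (a <= list_max (concat (map snd (map f (seq 0 (S n))))))%nat.
      apply: In_le_list_max; apply/in_concat; exists (H n); split => //.
      apply/in_map_iff; exists (f n); split => //.
      by apply/in_map_iff; exists n; split => //; apply/in_seq; lia.
    by have := bnd b Hb; rewrite /bound; lia.
  + by move=> n; have [] := fP n.
- move=> F fF; have [] // := star_lsum E y _ F fF.
  by move=> n; have [_ _ ? _] := fP n; rewrite -prefix.
- by move=> n; have [_ _ _] := fP n; rewrite prefix.
Qed.

End IdempotentSumSubsystem.

Lemma series_cvg0_small_terms x : series_cvg_to x qzero ->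
  forall e m, 0 < e -> exists n, (m <= n)%nat /\ qnorm (x n) < e.
Proof.
move=> x0 e m e0; have [N hN] := x0 (e / 2) ltac:(lra).
exists (N + m)%nat; split; first by lia.
have := hN (S (N + m)) ltac:(lia); have := hN (N + m)%nat ltac:(lia); rewrite !qsub0r /= => ? ?.
by rewrite -[x _](qaddKsub (psum x (N + m))); apply: Rle_lt_trans (qnormB _ _) _; lra.
Qed.

Lemma FS_tail_mono x m m' : (m <= m')%nat -> FS_tail x m' `<=` FS_tail x m.
Proof. by move=> mm' c [H [fH [mH ->]]]; exists H; split=> //; split=> // i /mH; lia. Qed.

Lemma FS_tail_add x m a : FS_tail x m a ->
  exists m', forall b, FS_tail x m' b -> FS_tail x m (qadd a b).
Proof.
move=> [Ha [[Ha0 ndHa] [mHa ->]]]; exists (m + S (list_max Ha))%nat.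
move=> _ [Hb [[Hb0 ndHb] [mHb ->]]]; exists (Ha ++ Hb); rewrite lsum_app.
split; last split=> // i /in_app_iff [/mHa|/mHb] //; last lia.
split; first by move=> /app_eq_nil [/Ha0].
apply: NoDup_app => // i /In_le_list_max ? /mHb; lia.
Qed.

Definition near0_tails (S : set quat) (x : nat -> quat) : set_system quat :=
  filter_from [set em : R * nat | 0 < em.1]
    (fun em => [set c | S c /\ qnorm c < em.1 /\ FS_tail x em.2 c]).

Lemma near0_tails_proper S x : (forall n, S (x n)) -> series_cvg_to x qzero ->
  ProperFilter (near0_tails S x).
Proof.
move=> xS x0; apply: filter_from_proper.
  apply: filter_from_filter; first by exists (1, 0%nat); rewrite /=; lra.
  move=> [e1 m1] [e2 m2] /= e10 e20; exists (Rmin e1 e2, (m1 + m2)%nat).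
    by apply: Rmin_pos.
  move=> c /= [Sc [ce Fc]]; have ? := Rmin_l e1 e2; have ? := Rmin_r e1 e2.
  by split; split=> //; split; try lra; apply: FS_tail_mono Fc; lia.
move=> [e m] /= e0; have [n [mn xn]] := series_cvg0_small_terms _ x0 _ m e0.
exists (x n); split=> //; split=> //; exists (n :: nil); split; first exact: fin_ne1.
by split; [move=> i [<-|[]]|rewrite /= qadd0r].
Qed.

Lemma near0_tails_op_closed S x : add_subsemigroup S -> op_closed qadd (ultras (near0_tails S x)).
Proof.
move=> addS p q [Up sFp] [Uq sFq]; split; first exact: ultra_op_ultra.
move=> A [[e m] /= e0 sBA].
have pB : p [set a | S a /\ qnorm a < e / 2 /\ FS_tail x m a].
  by apply: sFp; exists (e / 2, m) => //=; lra.
apply: filterS pB => a [Sa [ae /FS_tail_add [m' tail]]].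
have qB : q [set b | S b /\ qnorm b < e / 2 /\ FS_tail x m' b].
  by apply: sFq; exists (e / 2, m') => //=; lra.
apply: filterS qB => b [Sb [be /tail Fab]]; apply: sBA; split; first exact: addS.
by split=> //; apply: Rle_lt_trans (qnormD _ _) _; lra.
Qed.

Definition small_or_one (S : set quat) (a : quat) := a = qone \/ (S a /\ qnorm a < 1).

Lemma small_or_one_norm S a : small_or_one S a -> qnorm a <= 1.
Proof. by case=> [->|[_ ?]]; [rewrite qnorm1; lra|lra]. Qed.

(* Unlike in [mul_subsemigroup_ball], zero is harmless here: a product with a zero factor
   is that factor. *)
Lemma small_or_one_mul S a b : mul_subsemigroup_ball S ->
  small_or_one S a -> small_or_one S b -> small_or_one S (qmul a b).
Proof.
move=> mulS [->|[Sa a1]] [->|[Sb b1]]; rewrite ?qmul1l ?qmul1r; [by left|by right|by right|right].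
have [a0|a0] := pselect (a = qzero); first by subst a; rewrite qmul0l; split.
have [b0|b0] := pselect (b = qzero); first by subst b; rewrite qmul0r; split.
by have [? [? _]] := mulS a b Sa a1 a0 Sb b1 b0.
Qed.

Lemma lprod_small_or_one S y F : mul_subsemigroup_ball S ->
  (forall i, In i F -> small_or_one S (y i)) -> small_or_one S (lprod y F).
Proof.
move=> mulS; elim: F => [|i F IH] yF; first by left.
by apply: small_or_one_mul => //; [apply: yF; left|apply: IH => j Fj; apply: yF; right].
Qed.

Lemma sandwich_small S a b c : mul_subsemigroup_ball S ->
  small_or_one S a -> small_or_one S b -> S c -> qnorm c < 1 ->
  S (qmul (qmul a c) b) /\ qnorm (qmul (qmul a c) b) <= qnorm c.
Proof.
move=> mulS sa sb Sc c1.
have le : qnorm (qmul (qmul a c) b) <= qnorm c.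
  rewrite !qnormM; have := small_or_one_norm _ _ sa; have := small_or_one_norm _ _ sb.
  have := qnorm_ge0 b; have := Rmult_le_pos _ _ (qnorm_ge0 a) (qnorm_ge0 c).
  have := qnorm_ge0 c; nra.
split=> //.
have [e|[]//] : small_or_one S (qmul (qmul a c) b).
  by apply: small_or_one_mul => //; apply: small_or_one_mul => //; right.
by move: le; rewrite e qnorm1; lra.
Qed.

Definition sandwich_in (A : set quat) (l : list quat) (c : quat) :=
  forall F1, NoDup F1 -> below (length l) F1 -> forall F2, NoDup F2 -> below (length l) F2 ->
    A (qmul (qmul (lprod (lnth l) F1) c) (lprod (lnth l) F2)).

Lemma FP_sandwich y A : (forall n, sandwich_in A (map y (seq 0 n)) (y n)) ->
  forall F, fin_ne F -> A (lprod y F).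
Proof.
move=> yA F /fin_ne_split_max [n [l1 [l2 [-> [ndG bG]]]]].
have b1 : below n l1 by move=> i l1i; apply: bG; apply/in_app_iff; left.
have b2 : below n l2 by move=> i l2i; apply: bG; apply/in_app_iff; right.
rewrite lprod_app /= -qmulA -(lprod_prefix y _ _ b1) -(lprod_prefix y _ _ b2).
apply: yA; rewrite ?length_map ?length_seq //.
  exact: NoDup_app_remove_r ndG.
exact: NoDup_app_remove_l ndG.
Qed.

Section IdempotentNearZero.
Variables (S : set quat) (x : nat -> quat) (p : set_system quat).
Hypotheses (Up : UltraFilter p) (p_idem : ultra_op qadd p p = p).
Hypothesis near0_p : near0_tails S x `<=` p.

Lemma near0_small e : 0 < e -> p [set c | S c /\ qnorm c < e].
Proof. by move=> e0; apply: near0_p; exists (e, 0%nat) => // c [? [? _]]. Qed.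

Lemma near0_FS_tail m : p (FS_tail x m).
Proof. by apply: near0_p; exists (1, m) => [/=|c [_ [_ ?]]] //; lra. Qed.

Lemma idempotent_IP_near0 E : p E -> exists z,
  (forall n, S (z n) /\ qnorm (z n) < (1/2) ^ n) /\ forall F, fin_ne F -> E (lsum z F).
Proof.
move=> pE; have pEx (l : list quat) : p [set c | S c /\ qnorm c < (1/2) ^ length l].
  by apply: near0_small; apply: pow_lt; lra.
have [z [_ [zE zn]]] := idempotent_sum_subsystem x p Up p_idem near0_FS_tail E _ pE pEx.
by exists z; split=> // n; have := zn n; rewrite length_map length_seq.
Qed.

Hypothesis mulS : mul_subsemigroup_ball S.

(* Otherwise the complement of the sandwich set would contain an IP set near 0 whose
   sandwiched image is an IP set near 0 missing A. *)
Lemma IPstar_sandwich A a b : IPstar_near0 S A ->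
  small_or_one S a -> small_or_one S b -> p [set c | A (qmul (qmul a c) b)].
Proof.
move=> [_ Astar] sa sb.
have [//|pnA] := in_ultra_setVsetC [set c | A (qmul (qmul a c) b)] Up.
have [z [zS zE]] := idempotent_IP_near0 _ (filterI pnA (near0_small 1 ltac:(lra))).
pose w n := qmul (qmul a (z n)) b.
have zS1 n : S (z n) /\ qnorm (z n) < 1.
  have [Sz zn] := zS n; split=> //; apply: Rlt_le_trans zn _.
  by elim: n {Sz} => [|n IH] /=; lra.
have IPw : IP_near0 S (FS w).
  split.
    move=> _ [F [fF ->]]; rewrite /w lsum_sandwich.
    by have [_ [Sz z1]] := zE F fF; have [] := sandwich_small _ _ _ _ mulS sa sb Sz z1.
  exists w; split; [|split=> //].
    by move=> n; have [Sz z1] := zS1 n; have [] := sandwich_small _ _ _ _ mulS sa sb Sz z1.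
  apply: series_cvg_geometric => n; have [Sz z1] := zS1 n; rewrite /w.
  by have [_ wz] := sandwich_small _ _ _ _ mulS sa sb Sz z1; have [_ ?] := zS n; lra.
have [_ [z' [_ [_ sub]]]] := Astar _ IPw.
have [[F [fF e]] Ae] := sub _ (ex_intro _ (0%nat :: nil) (conj (fin_ne1 0) erefl)).
by have [nA _] := zE F fF; rewrite e /w lsum_sandwich in Ae; case: (nA Ae).
Qed.

Lemma sandwich_in_filter A l : IPstar_near0 S A ->
  Forall (fun a => S a /\ qnorm a < 1) l -> p (sandwich_in A l).
Proof.
move=> Astar small_l.
have sm F : below (length l) F -> small_or_one S (lprod (lnth l) F).
  move=> bF; apply: lprod_small_or_one => // i /bF il; right.
  exact: proj1 (Forall_forall _ _) small_l _ (nth_In _ _ il).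
apply: filter_forall_nodup_below => F1 _ b1; apply: filter_forall_nodup_below => F2 _ b2.
exact: IPstar_sandwich Astar (sm F1 b1) (sm F2 b2).
Qed.

End IdempotentNearZero.

Theorem theorem2p5 (S : quat -> Prop) (x : nat -> quat) (A : quat -> Prop) :
  qdense S ->
  add_subsemigroup S ->
  mul_subsemigroup_ball S ->
  (forall n, S (x n)) ->
  series_cvg_to x qzero ->
  IPstar_near0 S A ->
  exists y : nat -> quat,
    sum_subsystem y x /\
    qsubset (fun a => FS y a \/ FP y a) A.
Proof.
move=> _ addS mulS xS x0 Astar.
have [p [Up near0_p] p_idem] := exists_idempotent qadd qaddA _
  (near0_tails_proper S x xS x0) (near0_tails_op_closed S x addS).
have pA : p A.
  apply: filterS (IPstar_sandwich S x p Up p_idem near0_p mulS A qone qone Astar _ _);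
    [by move=> c /=; rewrite qmul1l qmul1r|by left|by left].
pose small l := Forall (fun a => S a /\ qnorm a < 1) l.
pose Ex l := [set c | (S c /\ qnorm c < 1) /\ (small l -> sandwich_in A l c)].
have pEx l : p (Ex l).
  apply: filterI; first by apply: (near0_small S x p near0_p); lra.
  have [sl|nsl] := pselect (small l).
    by apply: filterS (sandwich_in_filter S x p Up p_idem near0_p mulS A l Astar sl) => c ? _.
  by apply: filterS filterT => c _ /nsl.
have [y [ysub [yFS yEx]]] :=
  idempotent_sum_subsystem x p Up p_idem (near0_FS_tail S x p near0_p) A Ex pA pEx.
exists y; split=> // _ [[F [fF ->]]|[F [fF ->]]]; first exact: yFS.
apply: FP_sandwich F fF => n; have [_ sand] := yEx n; apply: sand.
by apply/Forall_forall => _ /in_map_iff [i [<- _]]; have [] := yEx i.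
Qed.
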